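(* Under the hypotheses of Proposition 1 (coin $U=\begin{bmatrix} a&b\\c&d\end{bmatrix}$ unitary with $abcd\ne0$, $\Delta=\det U=e^{i\xi}$, $\cos\phi_0=|a|$ with $\phi_0\in(0,\pi/2)$, $\lambda\in\{\pm e^{i(\phi_0+\xi/2)},\pm e^{i(-\phi_0+\xi/2)}\}$, $\gamma=(\lambda+\Delta\bar\lambda)/(2a)$), one has $|\gamma|=1$ and $|\lambda-\Delta\bar\lambda|^2/(4|b|^2)=1$. Moreover, taking $\Psi_0=\Psi$ with $\Psi^L(x)=(A+xB)\gamma^x$, $\Psi^R(x)=\{(A+xB)\frac{\lambda-\Delta\bar\lambda}{2}-\lambda B\}\gamma^{x-1}/b$ ($A,B\in\mathbb{C}$, $|A|+|B|\neq0$), the measure $\mu_n=\phi((U^{(s)})^n\Psi_0)$ satisfies, for all $n\ge0$ and $x\in\mathbb{Z}$, $$\mu_n(x)=2|A+xB|^2-2x|B|^2+\frac{|B|^2-\Re\big(A\bar B(1-\Delta\bar\lambda^2)\big)}{|b|^2}.$$ In particular this $\mu_0$ belongs to $\mathcal{M}_s(U)$.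
   Context: Two-state quantum walk on $\mathbb{Z}$: $(U^{(s)}\Psi)^L(x)=a\Psi^L(x+1)+b\Psi^R(x+1)$, $(U^{(s)}\Psi)^R(x)=c\Psi^L(x-1)+d\Psi^R(x-1)$; $\phi(\Psi)(x)=|\Psi^L(x)|^2+|\Psi^R(x)|^2$; $\mathcal{M}_s(U)=\{\mu\in[0,\infty)^{\mathbb{Z}}\setminus\{0\}:\exists\Psi_0$ with $\phi((U^{(s)})^n\Psi_0)=\mu$ for all $n\ge0\}$. $\Re(z)$ denotes the real part. *)

(* complex numbers as an arbitrary numClosedFieldType C
   (e.g. algC); all claims are algebraic identities. *)
From HB Require Import structures.
From mathcomp Require Import all_boot all_order all_algebra.
Set Implicit Arguments. Unset Strict Implicit. Unset Printing Implicit Defensive.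
Import Order.TTheory GRing.Theory Num.Theory.
Local Open Scope ring_scope.

Section Walk.
Variable C : numClosedFieldType.

(* two-component state on Z : x |-> (Psi^L(x), Psi^R(x)) *)
Definition state := int -> C * C.

Definition ca (U : 'M[C]_2) := U 0 0.
Definition cb (U : 'M[C]_2) := U 0 1.
Definition cc (U : 'M[C]_2) := U 1 0.
Definition cd (U : 'M[C]_2) := U 1 1.

Definition unitary2 (U : 'M[C]_2) : Prop :=
  U *m (map_mx (@Num.conj C) U)^T = 1%:M.

Definition step (U : 'M[C]_2) (Psi : state) : state :=
  fun x => (ca U * (Psi (x + 1)).1 + cb U * (Psi (x + 1)).2,
            cc U * (Psi (x - 1)).1 + cd U * (Psi (x - 1)).2).

Definition walk (U : 'M[C]_2) (n : nat) (Psi : state) : state :=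
  iter n (step U) Psi.

Definition phi (Psi : state) : int -> C :=
  fun x => `|(Psi x).1| ^+ 2 + `|(Psi x).2| ^+ 2.

Definition Ms (U : 'M[C]_2) (mu : int -> C) : Prop :=
  (forall x, 0 <= mu x) /\ (exists x, mu x != 0) /\
  exists Psi0 : state, forall (n : nat) (x : int), phi (walk U n Psi0) x = mu x.

(* e^{i phi0} with cos phi0 = |a|, phi0 in (0, pi/2) (so sin phi0 > 0) *)
Definition eiphi0 (a : C) : C := `|a| + 'i * sqrtC (1 - `|a| ^+ 2).

End Walk.

From HB Require Import structures.
From mathcomp Require Import all_boot all_order all_algebra.
From mathcomp Require Import ring.
Set Implicit Arguments. Unset Strict Implicit. Unset Printing Implicit Defensive.
Import Order.TTheory GRing.Theory Num.Theory.
Local Open Scope ring_scope.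

(* The state Psi is an eigenvector of U^(s) for the eigenvalue lam, and
   |lam| = 1, so phi((U^(s))^n Psi) = |lam|^(2n) phi(Psi) = phi(Psi).
   Unitarity gives d = Delta conj(a), c = - Delta conj(b) and |Delta| = 1.
   Each admissible lam has the form sg (|a| + tau) with sg^2 = Delta, |sg| = 1
   and tau = +-i|b|; then gam = sg |a| / a and h := (lam - Delta conj(lam))/2
   = sg tau, and the two eigenvector equations reduce to the identities
   lam = a gam + h, c b = h^2 and d = a gam^2.  The formula for phi(Psi) only
   uses |gam| = |lam| = 1, |h| = |b| and Re(h conj(lam)) = |b|^2. *)

Lemma det_mx2 (R : comNzRingType) (M : 'M[R]_2) :
  \det M = M 0 0 * M 1 1 - M 0 1 * M 1 0.
Proof.
rewrite (expand_det_row _ 0) !big_ord_recl big_ord0 /cofactor !det_mx11 !mxE /=.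
rewrite expr0 expr1 !mul1r mulN1r addr0 mulrN.
by congr (_ * _ - _ * _); congr (M _ _); apply/val_inj.
Qed.

Section QuantumWalk.
Variable C : numClosedFieldType.
Implicit Types (U : 'M[C]_2) (Psi : state C) (lam : C).

Lemma unitary2_rows U : unitary2 U ->
  `|ca U| ^+ 2 + `|cb U| ^+ 2 = 1 /\ cc U * (ca U)^* + cd U * (cb U)^* = 0.
Proof.
have e1 : lift ord0 ord0 = 1 :> 'I_2 by apply/val_inj.
move=> hU; split.
- move: (congr1 (fun M : 'M[C]_2 => M 0 0) hU).
  by rewrite !mxE !big_ord_recl big_ord0 !mxE addr0 e1 !normCK.
- move: (congr1 (fun M : 'M[C]_2 => M 1 0) hU).
  by rewrite !mxE !big_ord_recl big_ord0 !mxE addr0 e1.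
Qed.

Lemma unitary2_det_norm U : unitary2 U -> `|\det U| = 1.
Proof.
move/(congr1 determinant); rewrite det_mulmx det_tr det_map_mx det1 -normCK.
by move/eqP; rewrite sqrp_eq1 // => /eqP.
Qed.

Lemma unitary2_entries U : unitary2 U ->
  cd U = \det U * (ca U)^* /\ cc U = - (\det U * (cb U)^*).
Proof.
move=> /unitary2_rows[]; rewrite !normCK det_mx2 -/(ca U) -/(cb U) -/(cc U) -/(cd U).
move: (ca U) (cb U) (cc U) (cd U) => a b c d hab hcd; split.
- transitivity (d * (a * a^* + b * b^*)); first by rewrite hab mulr1.
  by rewrite -[RHS]addr0 -(mulr0 b) -hcd; ring.
- transitivity (c * (a * a^* + b * b^*)); first by rewrite hab mulr1.
  by rewrite -[RHS]addr0 -(mulr0 a) -hcd; ring.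
Qed.

Definition eigenstate U lam Psi : Prop :=
  forall x, step U Psi x = (lam * (Psi x).1, lam * (Psi x).2).

Lemma walk_eigenstate U lam Psi n x : eigenstate U lam Psi ->
  walk U n Psi x = (lam ^+ n * (Psi x).1, lam ^+ n * (Psi x).2).
Proof.
move=> eig; elim: n x => [|n IHn] x.
  by rewrite /walk /= expr0 !mul1r; case: (Psi x).
move: (eig x); rewrite /walk iterS -/(walk U n Psi) /step !IHn /= => -[e1 e2].
by rewrite !exprSr -!mulrA -e1 -e2; congr pair; ring.
Qed.

Lemma phi_ge0 Psi x : 0 <= phi Psi x.
Proof. by rewrite addr_ge0 ?exprn_ge0. Qed.

Lemma phi_neq0 Psi x : (Psi x).1 != 0 -> phi Psi x != 0.
Proof.
by move=> nz; rewrite paddr_eq0 ?exprn_ge0 // negb_and sqrf_eq0 normr_eq0 nz.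
Qed.

Lemma phi_walk_eigenstate U lam Psi n x :
  eigenstate U lam Psi -> `|lam| = 1 -> phi (walk U n Psi) x = phi Psi x.
Proof.
move=> eig lam1; rewrite /phi (walk_eigenstate _ _ eig) /= !normrM normrX lam1.
by rewrite expr1n !mul1r.
Qed.

Lemma eigenstate_Ms U lam Psi : eigenstate U lam Psi -> `|lam| = 1 ->
  (exists x, (Psi x).1 != 0) -> Ms U (phi Psi).
Proof.
move=> eig lam1 [x0 nz]; split; first exact: phi_ge0.
split; first by exists x0; exact: phi_neq0.
by exists Psi => n x; exact: phi_walk_eigenstate.
Qed.

(* The state Psi of the statement, with gam = g and h = (lam - Delta conj(lam))/2. *)
Definition eig_state (g h lam b A B : C) : state C := fun x =>
  ((A + x%:~R * B) * g ^ x, ((A + x%:~R * B) * h - lam * B) * g ^ (x - 1) / b).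

Lemma eig_state_eigenstate U g h lam A B :
  g != 0 -> cb U != 0 -> lam = ca U * g + h ->
  cc U * cb U = h ^+ 2 -> cd U = ca U * g ^+ 2 ->
  eigenstate U lam (eig_state g h lam (cb U) A B).
Proof.
move=> g0 b0 hlam hc hd x; rewrite /step /eig_state /= addrK.
have -> : cc U = h ^+ 2 / cb U by rewrite -hc mulfK.
rewrite hd hlam !(expfzDr _ _ g0) expr1z (_ : g ^ (-1) = g^-1) // intrD intrB.
move: (g ^ x) (x%:~R : C) => G X.
by congr pair; field; rewrite ?g0 ?b0.
Qed.

Lemma eig_state_neq0 g h lam b A B : g != 0 -> `|A| + `|B| != 0 ->
  exists x, (eig_state g h lam b A B x).1 != 0.
Proof.
move=> g0 AB0; have [A0|A0] := eqVneq A 0.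
  have B0 : B != 0 by move: AB0; rewrite A0 normr0 add0r normr_eq0.
  by exists 1; rewrite /= A0 add0r !mulf_neq0 ?expfz_neq0 ?intr_eq0.
by exists 0; rewrite /= mul0r addr0 expr0z mulr1.
Qed.

Lemma normCB2 (u v : C) : `|u - v| ^+ 2 = `|u| ^+ 2 + `|v| ^+ 2 - 2 * 'Re (u * v^*).
Proof. by rewrite !normCK ReE rmorphB rmorphM /= conjCK; field. Qed.

Lemma phi_eig_state g h lam b A B x :
  `|g| = 1 -> `|lam| = 1 -> `|h| = `|b| -> 'Re (h * lam^*) = `|b| ^+ 2 -> b != 0 ->
  phi (eig_state g h lam b A B) x =
    2 * `|A + x%:~R * B| ^+ 2 - 2 * x%:~R * `|B| ^+ 2
    + (`|B| ^+ 2 - 'Re (A * B^* * (2 * (h * lam^*)))) / `|b| ^+ 2.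
Proof.
move=> g1 lam1 hb Re_hlam b0.
have gk k : `|g ^ k| = 1.
  by case: k => n; rewrite /= ?normfV normrX g1 expr1n ?invr1.
have ReQ : 'Re ((A + x%:~R * B) * h * (lam * B)^*) =
    'Re (A * B^* * (h * lam^*)) + x%:~R * `|B| ^+ 2 * `|b| ^+ 2.
  rewrite -Re_hlam -ReMl ?realM ?rpred_int ?realX ?normr_real // -raddfD /=.
  by congr Re; rewrite rmorphM normCK; ring.
have Re2 : 'Re (A * B^* * (2 * (h * lam^*))) = 2 * 'Re (A * B^* * (h * lam^*)).
  by rewrite mulrCA (@ReMl _ 2) ?rpred_nat.
rewrite /phi /eig_state /= normf_div !normrM !gk !mulr1 expr_div_n normCB2 ReQ Re2.
rewrite !normrM lam1 hb mul1r.
by field; rewrite normr_eq0.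
Qed.

Lemma eiphi0E (a b : C) : `|a| ^+ 2 + `|b| ^+ 2 = 1 -> eiphi0 a = `|a| + 'i * `|b|.
Proof. by move=> hab; rewrite /eiphi0 -hab addrAC subrr add0r sqrCK. Qed.

(* lam = sg (|a| + tau) with sg^2 = Delta and tau = +-i|b| is the paper's
   lam = +-e^{i(+-phi0 + xi/2)}, since e^{i phi0} = |a| + i|b|. *)
Definition eigenvalue_param (a b sg tau : C) : Prop :=
  [/\ `|a| ^+ 2 + `|b| ^+ 2 = 1, `|sg| = 1, tau^* = - tau & tau ^+ 2 = - `|b| ^+ 2].

Lemma eigenvalue_cases (a b s lam : C) : `|a| ^+ 2 + `|b| ^+ 2 = 1 -> `|s| = 1 ->
  lam \in [:: eiphi0 a * s; - (eiphi0 a * s); (eiphi0 a)^* * s; - ((eiphi0 a)^* * s)] ->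
  exists sg tau,
    [/\ eigenvalue_param a b sg tau, sg ^+ 2 = s ^+ 2 & lam = sg * (`|a| + tau)].
Proof.
move=> hab s1; set t := 'i * `|b|.
have tC : t^* = - t by rewrite rmorphM /= conjCi conj_normC mulNr.
have t2 : t ^+ 2 = - `|b| ^+ 2 by rewrite exprMn sqrCi mulN1r.
have tNC : (- t)^* = - - t by rewrite rmorphN /= tC.
have eC : (eiphi0 a)^* = `|a| + - t by rewrite (eiphi0E hab) rmorphD /= conj_normC tC.
rewrite eC (eiphi0E hab) -/t !inE => /or4P[] /eqP ->.
- by exists s, t; split; [split | |]; rewrite // mulrC.
- by exists (- s), t; split; [split | |]; rewrite ?sqrrN ?normrN // mulrC mulNr.
- by exists s, (- t); split; [split | |]; rewrite ?sqrrN // mulrC.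
- by exists (- s), (- t); split; [split | |]; rewrite ?sqrrN ?normrN // mulrC mulNr.
Qed.

Section Eigenvalue.
Variables (a b sg tau : C).
Hypotheses (a0 : a != 0) (b0 : b != 0) (param : eigenvalue_param a b sg tau).

Let hab : `|a| ^+ 2 + `|b| ^+ 2 = 1. Proof. by case: param. Qed.
Let sg1 : `|sg| = 1. Proof. by case: param. Qed.
Let tauC : tau^* = - tau. Proof. by case: param. Qed.
Let tau2 : tau ^+ 2 = - `|b| ^+ 2. Proof. by case: param. Qed.

Let lam := sg * (`|a| + tau).

Let sg0 : sg != 0.
Proof. by rewrite -normr_eq0 sg1 oner_neq0. Qed.

Let lamC : lam^* = sg^-1 * (`|a| - tau).
Proof.
have sgC : sg^* = sg^-1 by apply: (mulfI sg0); rewrite -normCK sg1 expr1n divff.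
by rewrite rmorphM rmorphD /= sgC conj_normC tauC.
Qed.

Lemma norm_lam : `|lam| = 1.
Proof.
apply/eqP; rewrite -(sqrp_eq1 (normr_ge0 _)) normCK lamC; apply/eqP.
by rewrite -hab -[`|b| ^+ 2]opprK -tau2 /lam; field.
Qed.

Lemma lam_addE : (lam + sg ^+ 2 * lam^*) / (2 * a) = sg * `|a| / a.
Proof. by rewrite lamC /lam; field; rewrite ?a0 ?sg0. Qed.

Lemma lam_subE : (lam - sg ^+ 2 * lam^*) / 2 = sg * tau.
Proof. by rewrite lamC /lam; field. Qed.

Lemma norm_gamma : `|sg * `|a| / a| = 1.
Proof. by rewrite normf_div normrM sg1 normr_id mul1r divff ?normr_eq0. Qed.

Lemma norm_sg_tau : `|sg * tau| = `|b|.
Proof.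
rewrite normrM sg1 mul1r; apply/eqP.
by rewrite -(eqrXn2 (_ : 0 < 2)%N) // normCK tauC mulrN -expr2 tau2 opprK.
Qed.

Lemma norm_lam_sub : `|lam - sg ^+ 2 * lam^*| ^+ 2 / (4 * `|b| ^+ 2) = 1.
Proof.
have -> : lam - sg ^+ 2 * lam^* = 2 * (sg * tau) by rewrite -lam_subE; field.
rewrite normrM norm_sg_tau normr_nat.
by field; rewrite normr_eq0.
Qed.

Lemma double_sg_tau_lamC : 2 * (sg * tau * lam^*) = 1 - sg ^+ 2 * lam^* ^+ 2.
Proof. by rewrite lamC -[in RHS]hab -[`|b| ^+ 2]opprK -tau2; field. Qed.

Lemma Re_sg_tau_lamC : 'Re (sg * tau * lam^*) = `|b| ^+ 2.
Proof.
rewrite lamC (_ : _ * _ = `|a| * tau - tau ^+ 2); last by field.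
by rewrite ReE rmorphB rmorphM rmorphXn /= conj_normC tauC sqrrN tau2; field.
Qed.

Lemma coin_eigenstate U A B :
  ca U = a -> cb U = b -> cc U = - (sg ^+ 2 * b^*) -> cd U = sg ^+ 2 * a^* ->
  eigenstate U lam (eig_state (sg * `|a| / a) (sg * tau) lam b A B).
Proof.
move=> ha hb hc hd; rewrite -hb; apply: eig_state_eigenstate.
- by rewrite -normr_eq0 norm_gamma oner_neq0.
- by rewrite hb.
- by rewrite ha /lam; field.
- by rewrite hc hb mulNr -mulrA -normCKC -[`|b| ^+ 2]opprK -tau2; ring.
- by rewrite hd ha -[a^*](mulKf a0) -normCK; field.
Qed.

End Eigenvalue.

End QuantumWalk.

Theorem corollary1 (C : numClosedFieldType) (U : 'M[C]_2)
  (s lam gam A B : C) :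
  unitary2 U ->
  ca U * cb U * cc U * cd U != 0 ->
  (* s = e^{i xi/2}, where Delta = det U = e^{i xi} *)
  s ^+ 2 = \det U ->
  lam \in [:: eiphi0 (ca U) * s; - (eiphi0 (ca U) * s);
              (eiphi0 (ca U))^* * s; - ((eiphi0 (ca U))^* * s)] ->
  gam = (lam + \det U * lam^*) / (2 * ca U) ->
  `|A| + `|B| != 0 ->
  let Delta := \det U in
  let Psi0 : state C := fun x : int =>
    ((A + x%:~R * B) * gam ^ x,
     ((A + x%:~R * B) * ((lam - Delta * lam^*) / 2) - lam * B) * gam ^ (x - 1)
       / cb U) in
  `|gam| = 1 /\
  `|lam - Delta * lam^*| ^+ 2 / (4 * `|cb U| ^+ 2) = 1 /\
  (forall (n : nat) (x : int),
     phi (walk U n Psi0) x =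
       2 * `|A + x%:~R * B| ^+ 2 - 2 * x%:~R * `|B| ^+ 2
       + (`|B| ^+ 2 - 'Re (A * B^* * (1 - Delta * lam^* ^+ 2))) / `|cb U| ^+ 2) /\
  Ms U (phi Psi0).
Proof.
move=> hU + hs hlam -> hAB.
rewrite !mulf_eq0 !negb_or => /andP[/andP[/andP[a0 b0] _] _].
have [hab _] := unitary2_rows hU.
have s1 : `|s| = 1.
  by apply/eqP; rewrite -(sqrp_eq1 (normr_ge0 s)) -normrX hs unitary2_det_norm.
have [sg [tau [param sgs ->]]] := eigenvalue_cases hab s1 hlam.
have [hd hc] := unitary2_entries hU; rewrite -hs -sgs in hd hc.
have eig := coin_eigenstate a0 b0 param A B erefl erefl hc hd.
have gam1 := norm_gamma a0 param; have lam1 := norm_lam param.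
rewrite /= -hs -sgs (lam_addE a0 param) (lam_subE param).
split; first exact: gam1.
split; first exact: norm_lam_sub b0 param.
split; last first.
  apply: (eigenstate_Ms eig lam1).
  by apply: eig_state_neq0; rewrite // -normr_eq0 gam1 oner_neq0.
move=> n x; rewrite (phi_walk_eigenstate _ _ eig lam1) -(double_sg_tau_lamC param).
by rewrite phi_eig_state ?gam1 ?lam1 ?(norm_sg_tau param) ?(Re_sg_tau_lamC param).
Qed.
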